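(* Let $T$ be an $n$-simplex, $m\ge0$ and $k\ge 2m+1$. Then the sets $D(\texttt v,m)$, $\texttt v\in\Delta_0(T)$, and the sets $\mathbb T^\ell_{k,1}(f)\setminus D(\Delta_0(f),m)$, $f\in\Delta_\ell(T)$, $\ell=1,\dots,n$, are pairwise disjoint and their union is $\mathbb T^n_k$. Consequently $$\mathbb P_k(T)=\mathbb P_k(D(\Delta_0(T),m))\oplus\bigoplus_{\ell=1}^n\bigoplus_{f\in\Delta_\ell(T)}\mathbb P_k\big(\mathbb T^\ell_{k,1}(f)\setminus D(\Delta_0(f),m)\big).$$
   Context: $T$ has vertices $\texttt v_0,\dots,\texttt v_n$ and barycentric coordinates $\lambda_0,\dots,\lambda_n$. $\mathbb N$ includes $0$; $\mathbb T^n_k=\{\alpha\in\mathbb N^{n+1}:\sum_i\alpha_i=k\}$; $\lambda^\alpha=\prod_i\lambda_i^{\alpha_i}$; for $S\subseteq\mathbb T^n_k$, $\mathbb P_k(S)=\mathrm{span}\{\lambda^\alpha:\alpha\in S\}$. $\Delta_\ell(T)$ is the set of $\ell$-dimensional faces; a face $f$ is identified with its vertex index set $f\subseteq\{0,\dots,n\}$, $f^*$ is its complement, and $\Delta_0(f)$ is its set of vertices. $D(f,r)=\{\alpha\in\mathbb T^n_k:\sum_{i\in f^*}\alpha_i\le r\}$; for a set of vertices, $D(\Delta_0(f),m)=\bigcup_{\texttt v\in\Delta_0(f)}D(\texttt v,m)$. $\mathbb T^\ell_{k,1}(f)=\{\alpha\in\mathbb T^n_k:\alpha_i\ge1\ \forall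 i\in f,\ \alpha_i=0\ \forall i\in f^*\}$ (lattice nodes in the interior of $f$). *)

From HB Require Import structures.
From mathcomp Require Import all_boot all_order all_algebra.
From mathcomp Require Import mpoly.

Set Implicit Arguments.
Unset Strict Implicit.
Unset Printing Implicit Defensive.

Import Order.TTheory GRing.Theory Num.Theory.
Local Open Scope ring_scope.

(* Multi-indices alpha in N^{n+1} with entries <= k (every alpha with
   |alpha| = k has entries <= k, so nothing is lost). Vertices of T are
   indexed by 'I_n.+1; a face f is identified with its vertex index set. *)
Definition mindex (n k : nat) := {ffun 'I_n.+1 -> 'I_k.+1}.

Definition latt (n k : nat) : {set mindex n k} :=
  [set a : mindex n k | (\sum_(i < n.+1) (a i : nat) == k)%N].

Definition Dset (n k : nat) (f : {set 'I_n.+1}) (r : nat) : {set mindex n k} :=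
  [set a in latt n k | (\sum_(i in ~: f) (a i : nat) <= r)%N].

Definition Dverts (n k : nat) (f : {set 'I_n.+1}) (m : nat) : {set mindex n k} :=
  \bigcup_(i in f) Dset k [set i] m.

Definition Tint (n k : nat) (f : {set 'I_n.+1}) : {set mindex n k} :=
  [set a in latt n k | [forall i, (i \in f) ==> (0 < (a i : nat))%N]
                       && [forall i, (i \notin f) ==> ((a i : nat) == 0%N)]].

Definition lampow (R : ringType) (n k : nat) (lam : 'I_n.+1 -> {mpoly R[n]})
  (a : mindex n k) : {mpoly R[n]} :=
  \prod_(i < n.+1) lam i ^+ (a i : nat).

Definition inPk (R : ringType) (n k : nat) (lam : 'I_n.+1 -> {mpoly R[n]})
  (S : {set mindex n k}) (p : {mpoly R[n]}) : Prop :=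
  exists c : mindex n k -> R, p = \sum_(a in S) c a *: lampow lam a.

From HB Require Import structures.
From mathcomp Require Import all_boot all_order all_algebra.
From mathcomp Require Import mpoly zify.
Import Order.TTheory GRing.Theory Num.Theory.
Set Implicit Arguments.
Unset Strict Implicit.
Unset Printing Implicit Defensive.

(* A node alpha of T^n_k lies in D(v_i, m) iff alpha_i >= k - m.  Since 2 (k - m) > k, no node
   lies in two of these sets, and a node outside all of them has a support f with at least two
   vertices; it then lies in T^l_{k,1}(f) \ D(Delta_0(f), m) for that f and for no other, because
   T^l_{k,1}(f) consists of the nodes with support exactly f.
   For the direct sum it suffices that the lambda^alpha, |alpha| = k, form a basis of the
   polynomials of degree at most k.  They span: 1 = sum_i lambda_i and x_r = sum_i v_i(r) lambda_i,
   so every monomial of degree j <= k is a combination of products of k barycentric coordinates.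
   There are no more of them than monomials of degree at most k, so they are linearly independent,
   and splitting a basis along a partition of its index set gives a direct sum. *)

Section LatticePartition.
Variables (n m k : nat).
Implicit Types (a : mindex n k) (i j : 'I_n.+1) (f g : {set 'I_n.+1}).

Lemma in_latt a : (a \in latt n k) = (\sum_i (a i : nat) == k)%N.
Proof. by rewrite inE. Qed.

Lemma Dset_subset f r : Dset k f r \subset latt n k.
Proof. by apply/subsetP => a; rewrite inE => /andP[]. Qed.

Lemma in_Dset1 a i : (a \in Dset k [set i] m) = (a \in latt n k) && (k <= m + a i)%N.
Proof.
rewrite inE (eq_bigl (fun j => j != i)) => [|j]; last by rewrite !inE.
have [|] //= := boolP (a \in latt n k).
(* [lia] fails on atoms such as [a i] whose type mentions [k], hence the generalization. *)
rewrite in_latt (bigD1 i) //=; move: (a i : nat) (\sum_(j | j != i) _) => x S.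
by move=> /eqP; lia.
Qed.

Lemma Dverts_setT : Dverts k [set: 'I_n.+1] m = \bigcup_i Dset k [set i] m.
Proof. by apply: eq_bigl => i; rewrite inE. Qed.

Lemma Tint_subset f : Tint k f \subset latt n k.
Proof. by apply/subsetP => a; rewrite inE => /andP[]. Qed.

Lemma in_TintP f a : a \in Tint k f -> forall i, (i \in f) = (0 < (a i : nat))%N.
Proof.
rewrite inE => /and3P[_ /forallP f_pos /forallP f'_0] i.
have [iF|iF] := boolP (i \in f); first by rewrite (implyP (f_pos i)).
by rewrite (eqP (implyP (f'_0 i) iF)).
Qed.

Lemma Tint_supp a : a \in latt n k -> a \in Tint k [set i | (0 < (a i : nat))%N].
Proof.
move=> aL; rewrite inE aL /=.
by apply/andP; split; apply/forallP => i; rewrite inE ?implybb // -eqn0Ngt implybb.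
Qed.

Lemma Tint_subset_Dset f : Tint k f \subset Dset k f m.
Proof.
apply/subsetP => a aT; rewrite inE (subsetP (Tint_subset f)) //= big1 // => i.
by rewrite inE (in_TintP aT) -eqn0Ngt => /eqP.
Qed.

Definition TintD f := Tint k f :\: Dverts k f m.

Lemma TintD_disjoint f g : f != g -> TintD f :&: TintD g = set0.
Proof.
move=> /negP fg; apply/setP => a; rewrite in_setI !in_setD in_set0.
apply/negP => /andP[/andP[_ Tf] /andP[_ Tg]].
by apply: fg; apply/eqP/setP => i; rewrite (in_TintP Tf) (in_TintP Tg).
Qed.

Hypothesis k_gt2m : (2 * m + 1 <= k)%N.

Lemma Dset1_disjoint i j : i != j -> Dset k [set i] m :&: Dset k [set j] m = set0.
Proof.
move=> ij; apply/setP => a; rewrite in_setI in_set0 !in_Dset1 in_latt.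
apply/negP => /andP[/andP[/eqP a_sum ai] /andP[_ aj]].
have : (a i + a j <= \sum_l (a l : nat))%N.
  by rewrite (bigD1 i) //= leq_add2l (bigD1 j) 1?eq_sym //= leq_addr.
by rewrite a_sum; move: ai aj; move: (a i : nat) (a j : nat) => x y; lia.
Qed.

Lemma Dset1_TintD_disjoint i f : Dset k [set i] m :&: TintD f = set0.
Proof.
apply/setP => a; rewrite in_setI in_setD in_set0.
apply/negP => /and3P[Di /bigcupP nD Ta].
have [iF|] := boolP (i \in f); first by apply: nD; exists i.
rewrite (in_TintP Ta) -eqn0Ngt => /eqP ai0.
by move: Di; rewrite in_Dset1 ai0 => /andP[_]; lia.
Qed.

Lemma Dverts_TintD_disjoint f : Dverts k [set: 'I_n.+1] m :&: TintD f = set0.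
Proof.
apply/setP => a; rewrite Dverts_setT in_setI in_set0.
apply/negP => /andP[/bigcupP[i _ Di] aD].
have : a \in Dset k [set i] m :&: TintD f by rewrite in_setI Di.
by rewrite Dset1_TintD_disjoint in_set0.
Qed.

Lemma latt_partition : latt n k = (\bigcup_i Dset k [set i] m)
  :|: \bigcup_(f : {set 'I_n.+1} | (2 <= #|f|)%N) TintD f.
Proof.
apply/setP => a; apply/idP/idP; last first.
  case/setUP => /bigcupP[x _]; first exact/subsetP/Dset_subset.
  by rewrite inE => /andP[_]; apply/subsetP/Tint_subset.
move=> aL; rewrite in_setU.
have [//|/bigcupP nD] := boolP (a \in \bigcup_i Dset k [set i] m).
pose f := [set i | (0 < (a i : nat))%N].
have aT : a \in Tint k f by apply: Tint_supp.
have aDf := subsetP (Tint_subset_Dset f) a aT.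
apply/bigcupP; exists f; last first.
  by rewrite inE aT andbT; apply/bigcupP => -[i _ Di]; apply: nD; exists i.
case: (ltngtP #|f| 1) => [|//|/eqP/cards1P[i f1]]; last first.
  by case: nD; exists i; rewrite // -f1.
rewrite ltnS leqn0 cards_eq0 => /eqP f0.
move: aDf; rewrite inE f0 setC0 aL /= (eq_bigl xpredT) => [|i]; last exact: in_setT.
by move: aL; rewrite in_latt => /eqP ->; lia.
Qed.

End LatticePartition.

Local Open Scope ring_scope.

Section Span.
Variables (R : comRingType) (n : nat) (lam : 'I_n.+1 -> {mpoly R[n]}).

Lemma inPk0 k (S : {set mindex n k}) : inPk lam S 0.
Proof. by exists (fun=> 0); rewrite big1 // => a _; rewrite scale0r. Qed.

Lemma inPkD k (S : {set mindex n k}) p q :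
  inPk lam S p -> inPk lam S q -> inPk lam S (p + q).
Proof.
case=> [c ->] [d ->]; exists (fun a => c a + d a).
by rewrite -big_split; apply: eq_bigr => a _; rewrite scalerDl.
Qed.

Lemma inPkZ k (S : {set mindex n k}) x p : inPk lam S p -> inPk lam S (x *: p).
Proof.
case=> c ->; exists (fun a => x * c a).
by rewrite scaler_sumr; apply: eq_bigr => a _; rewrite scalerA.
Qed.

Lemma inPk_sum k (S : {set mindex n k}) (I : Type) (r : seq I) (P : pred I) F :
  (forall i, P i -> inPk lam S (F i)) -> inPk lam S (\sum_(i <- r | P i) F i).
Proof.
move=> SF; elim/big_rec: _ => [|i p Pi Sp]; first exact: inPk0.
exact: inPkD (SF i Pi) Sp.
Qed.

Lemma inPk_lampow k (S : {set mindex n k}) a : a \in S -> inPk lam S (lampow lam a).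
Proof.
move=> aS; exists (fun b => (b == a)%:R).
rewrite (bigD1 a) //= eqxx scale1r big1 ?addr0 // => b /andP[_ /negbTE ->].
by rewrite scale0r.
Qed.

Lemma inPk_subset k (S S' : {set mindex n k}) p :
  S \subset S' -> inPk lam S p -> inPk lam S' p.
Proof.
move=> sSS' [c ->]; exists (fun b => if b \in S then c b else 0).
rewrite [RHS]big_mkcond [LHS]big_mkcond; apply: eq_bigr => b _.
have [bS|_] := boolP (b \in S); first by rewrite (subsetP sSS').
by case: (b \in S'); rewrite ?scale0r.
Qed.

Lemma inPk_latt0_1 : inPk lam (latt n 0) 1.
Proof.
have -> : 1 = lampow lam ([ffun => ord0] : mindex n 0).
  by rewrite /lampow big1 // => i _; rewrite ffunE expr0.
by apply: inPk_lampow; rewrite inE big1 // => i _; rewrite ffunE.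
Qed.

Definition mindex_incr d (a : mindex n d) (i : 'I_n.+1) : mindex n d.+1 :=
  [ffun j => inord ((a j : nat) + (j == i))].

Lemma mindex_incrE d (a : mindex n d) i j :
  mindex_incr a i j = ((a j : nat) + (j == i))%N :> nat.
Proof.
by rewrite ffunE inordK //; have := ltn_ord (a j); case: (j == i) => /=; lia.
Qed.

Lemma mindex_incr_latt d (a : mindex n d) i :
  a \in latt n d -> mindex_incr a i \in latt n d.+1.
Proof.
rewrite !in_latt => /eqP a_sum; under eq_bigr do rewrite mindex_incrE.
by rewrite big_split /= a_sum -big_mkcond /= big_pred1_eq addn1.
Qed.

Lemma lampow_incr d (a : mindex n d) i :
  lampow lam (mindex_incr a i) = lampow lam a * lam i.
Proof.
rewrite /lampow; under eq_bigr do rewrite mindex_incrE exprD.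
rewrite big_split /=; congr (_ * _).
by rewrite (bigD1 i) //= eqxx expr1 big1 ?mulr1 // => j /negbTE ->.
Qed.

Lemma inPk_latt_mulr d p (w : 'I_n.+1 -> R) : inPk lam (latt n d) p ->
  inPk lam (latt n d.+1) (p * \sum_i w i *: lam i).
Proof.
case=> c ->; rewrite mulr_suml; apply: inPk_sum => a aL.
rewrite mulr_sumr; apply: inPk_sum => i _.
rewrite -scalerAl -scalerAr -lampow_incr.
by do 2!apply: inPkZ; apply/inPk_lampow/mindex_incr_latt.
Qed.

End Span.

Section Affine.
Variables (R : comRingType) (n : nat).
Implicit Types p : {mpoly R[n]}.

Lemma affine_decomp p : (msize p <= 2)%N -> p = p@_0 *: 1 + \sum_j p@_U_(j) *: 'X_j.
Proof.
move=> p_aff; apply/mpolyP => mo.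
rewrite mcoeffD mcoeffZ mcoeff1 raddf_sum /=.
under eq_bigr do rewrite mcoeffZ mcoeffX.
have [->|mo_nz] := eqVneq mo 0%MM.
  by rewrite mulr1 big1 ?addr0 // => j _; rewrite mnm1_eq0 mulr0.
rewrite mulr0 add0r; have [/mdeg1P[i /eqP ->]|mo_deg] := boolP (mdeg mo == 1%N).
  rewrite (bigD1 i) //= eqxx mulr1 big1 ?addr0 // => j ji.
  suff /negbTE -> : (U_(j) != U_(i))%MM by rewrite mulr0.
  by apply/negP => /eqP/mnmP/(_ j); rewrite !mnm1E eqxx eq_sym (negbTE ji).
have : (msize p <= mdeg mo)%N.
  by apply: leq_trans p_aff _; move: mo_nz mo_deg; rewrite -mdeg_eq0; lia.
move/msize_mdeg_ge; rewrite mcoeff_msupp negbK => /eqP ->.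
rewrite big1 // => j _; case: eqP => [mo_j|]; last by rewrite mulr0.
by move: mo_deg; rewrite -mo_j mdeg1.
Qed.

Lemma affine_eval p x : (msize p <= 2)%N -> p.@[x] = p@_0 + \sum_j p@_U_(j) * x j.
Proof.
move=> p_aff; rewrite {1}(affine_decomp p_aff) mevalD mevalZ meval1 mulr1.
rewrite (big_morph _ (mevalD x) (meval0 x)).
by congr (_ + _); apply: eq_bigr => j _; rewrite mevalZ mevalXU.
Qed.

Lemma affine_comb (lam : 'I_n.+1 -> {mpoly R[n]}) (w : 'I_n.+1 -> R) :
  (forall i, msize (lam i) <= 2)%N ->
  \sum_i w i *: lam i = (\sum_i w i * (lam i)@_0) *: 1
                        + \sum_j (\sum_i w i * (lam i)@_U_(j)) *: 'X_j.
Proof.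
move=> lam_aff; under eq_bigr do rewrite (affine_decomp (lam_aff _)) scalerDr scaler_sumr.
rewrite big_split /= scaler_suml exchange_big /=; congr (_ + _).
  by apply: eq_bigr => i _; rewrite scalerA.
by apply: eq_bigr => j _; rewrite scaler_suml; apply: eq_bigr => i _; rewrite scalerA.
Qed.

End Affine.

Section Barycentric.
Variables (R : fieldType) (n : nat).
Variables (v : 'I_n.+1 -> 'I_n -> R) (lam : 'I_n.+1 -> {mpoly R[n]}).
Hypothesis lam_affine : forall i, (msize (lam i) <= 2)%N.
Hypothesis lam_vert : forall i j, (lam i).@[v j] = (i == j)%:R.

Let lam_coef_mx : 'M[R]_n.+1 :=
  \matrix_(i, s) if unlift ord0 s is Some j then (lam i)@_U_(j) else (lam i)@_0.
Let vert_mx : 'M[R]_n.+1 := \matrix_(s, l) if unlift ord0 s is Some j then v l j else 1.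

(* [lam_coef_mx *m vert_mx] is the matrix of the values [lam_i(v_l)], i.e. the identity, and a
   one-sided inverse of a square matrix is two-sided. *)
Lemma vert_lam_coef_mx : vert_mx *m lam_coef_mx = 1%:M.
Proof.
apply: mulmx1C; apply/matrixP => i l; rewrite !mxE big_ord_recl !mxE unlift_none mulr1.
under eq_bigr do rewrite !mxE liftK.
by rewrite -affine_eval // lam_vert.
Qed.

Lemma vert_mx_comb_lam s :
  \sum_i vert_mx s i *: lam i = if unlift ord0 s is Some r then 'X_r else 1.
Proof.
have vc t : \sum_i vert_mx s i * lam_coef_mx i t = (s == t)%:R.
  by move/matrixP: vert_lam_coef_mx => /(_ s t); rewrite !mxE.
have vc0 : \sum_i vert_mx s i * (lam i)@_0 = (s == ord0)%:R.
  by rewrite -vc; apply: eq_bigr => i _; rewrite [lam_coef_mx _ _]mxE unlift_none.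
have vcX j : \sum_i vert_mx s i * (lam i)@_U_(j) = (s == lift ord0 j)%:R.
  by rewrite -vc; apply: eq_bigr => i _; rewrite [lam_coef_mx _ _]mxE liftK.
rewrite affine_comb // vc0; under eq_bigr do rewrite vcX.
case: unliftP => [r ->|->].
  rewrite eq_sym (negbTE (neq_lift _ _)) scale0r add0r (bigD1 r) //= eqxx scale1r.
  by rewrite big1 ?addr0 // => j; rewrite (inj_eq lift_inj) eq_sym => /negbTE ->; rewrite scale0r.
rewrite eqxx scale1r big1 ?addr0 // => j _.
by rewrite (negbTE (neq_lift _ _)) scale0r.
Qed.

Lemma sum_lam : \sum_i lam i = 1.
Proof.
have := vert_mx_comb_lam ord0; rewrite unlift_none => <-.
by apply: eq_bigr => i _; rewrite mxE unlift_none scale1r.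
Qed.

Lemma X_bary r : 'X_r = \sum_i v i r *: lam i.
Proof.
have := vert_mx_comb_lam (lift ord0 r); rewrite liftK => <-.
by apply: eq_bigr => i _; rewrite mxE liftK.
Qed.

End Barycentric.

Section Degree.
Variables (R : idomainType) (n : nat) (lam : 'I_n.+1 -> {mpoly R[n]}).
Hypothesis lam_affine : forall i, (msize (lam i) <= 2)%N.

Lemma msizeM_leq (p q : {mpoly R[n]}) a b :
  (msize p <= a.+1)%N -> (msize q <= b.+1)%N -> (msize (p * q) <= (a + b).+1)%N.
Proof.
have [->|p_nz] := eqVneq p 0; first by rewrite mul0r msize0.
have [->|q_nz] := eqVneq q 0; first by rewrite mulr0 msize0.
by rewrite msizeM //; lia.
Qed.

Lemma msize_lampow k (a : mindex n k) :
  a \in latt n k -> (msize (lampow lam a) <= k.+1)%N.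
Proof.
rewrite in_latt => /eqP a_sum.
suff : (msize (lampow lam a) <= (\sum_i (a i : nat)).+1)%N by rewrite a_sum.
rewrite /lampow.
elim/big_rec2: _ => [|i d p _ p_deg]; first by rewrite msize1.
apply: msizeM_leq p_deg; elim: (a i : nat) => [|e e_deg]; first by rewrite expr0 msize1.
by rewrite exprS; apply: (msizeM_leq (lam_affine i)).
Qed.

Lemma msize_inPk_latt k p : inPk lam (latt n k) p -> (msize p <= k.+1)%N.
Proof.
case=> c ->; elim/big_rec: _ => [|a q aL q_deg]; first by rewrite msize0.
apply: leq_trans (msizeD_le _ _) _; rewrite geq_max q_deg andbT.
exact: leq_trans (msizeZ_le _ _) (msize_lampow aL).
Qed.

End Degree.

Section Spanning.
Variables (R : fieldType) (n : nat).
Variables (v : 'I_n.+1 -> 'I_n -> R) (lam : 'I_n.+1 -> {mpoly R[n]}).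
Hypothesis lam_affine : forall i, (msize (lam i) <= 2)%N.
Hypothesis lam_vert : forall i j, (lam i).@[v j] = (i == j)%:R.

Lemma inPk_latt_succ d p : inPk lam (latt n d) p -> inPk lam (latt n d.+1) p.
Proof.
move=> /(inPk_latt_mulr (fun=> 1)).
by under eq_bigr do rewrite scale1r; rewrite (sum_lam lam_affine lam_vert) mulr1.
Qed.

Lemma inPk_latt_leq d d' p : (d <= d')%N ->
  inPk lam (latt n d) p -> inPk lam (latt n d') p.
Proof.
move/subnK <-; elim: (d' - d)%N => [//|e IHe] p_d.
exact/inPk_latt_succ/IHe.
Qed.

Lemma inPk_latt_mulX d p r : inPk lam (latt n d) p -> inPk lam (latt n d.+1) (p * 'X_r).
Proof. by rewrite (X_bary lam_affine lam_vert r); apply: inPk_latt_mulr. Qed.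

Lemma inPk_latt_monomial (mo : 'X_{1..n}) : inPk lam (latt n (mdeg mo)) 'X_[mo].
Proof.
suff mono_deg d mo' : mdeg mo' = d -> inPk lam (latt n d) 'X_[mo'] by apply: mono_deg.
elim: d mo' {mo} => [|d IHd] mo mo_deg.
  by move/eqP: mo_deg; rewrite mdeg_eq0 => /eqP ->; rewrite mpolyX0; apply: inPk_latt0_1.
have /existsP[i mo_i] : [exists i, 0 < mo i]%N.
  apply: contraT => /existsPn mo0; move: mo_deg; rewrite mdegE big1 // => i _.
  by apply/eqP; rewrite -leqn0 leqNgt mo0.
have mo_split : mo = (mo - U_(i) + U_(i))%MM.
  apply/mnmP => j; rewrite mnmDE mnmBE mnm1E.
  by case: eqP => [<-|_]; [lia | rewrite subn0 addn0].
rewrite mo_split mpolyXD; apply/inPk_latt_mulX/IHd.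
by move: mo_deg; rewrite {1}mo_split mdegD mdeg1 addn1 => -[].
Qed.

Lemma msize_inPk_lattP k p : (msize p <= k.+1)%N <-> inPk lam (latt n k) p.
Proof.
split; last exact: msize_inPk_latt.
move=> p_deg; rewrite (mpolyE p); apply: inPk_sum => mo _.
have [mo_p|] := boolP (mo \in msupp p); last first.
  by rewrite mcoeff_msupp negbK => /eqP ->; rewrite scale0r; apply: inPk0.
apply/inPkZ/(inPk_latt_leq _ (inPk_latt_monomial mo)).
by have := msize_mdeg_lt mo_p; lia.
Qed.

End Spanning.

Section Independence.
Variables (R : fieldType) (n k : nat) (T : finType) (S : {set T}) (g : T -> {mpoly R[n]}).
Hypothesis g_span : forall p, (msize p <= k.+1)%N -> exists c, p = \sum_(a in S) c a *: g a.
Hypothesis S_card : (#|S| <= #|{: 'X_{1..n < k.+1}}|)%N.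

Let coef_mx : 'M[R]_(#|S|, #|{: 'X_{1..n < k.+1}}|) :=
  \matrix_(r, s) (g (enum_val r))@_(enum_val s : 'X_{1..n < k.+1}).

Lemma coef_mx_comb (c : T -> R) :
  \row_r c (enum_val r) *m coef_mx
  = \row_s (\sum_(a in S) c a *: g a)@_(enum_val s : 'X_{1..n < k.+1}).
Proof.
apply/rowP => s; rewrite !mxE raddf_sum [in RHS]big_enum_val /=.
by apply: eq_bigr => r _; rewrite !mxE mcoeffZ.
Qed.

Lemma coef_mx_full : row_full coef_mx.
Proof.
rewrite -sub1mx; apply/row_subP => s; rewrite row1.
have [|c X_s] := @g_span ('X_[(enum_val s : 'X_{1..n < k.+1})]).
  by rewrite msizeX ltnS -ltnS bmdeg.
apply/submxP; exists (\row_r c (enum_val r)); rewrite coef_mx_comb -X_s.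
apply/rowP => t; rewrite !mxE mcoeffX.
by rewrite -bmeqP (inj_eq enum_val_inj) eq_sym.
Qed.

Lemma span_free (c : T -> R) :
  \sum_(a in S) c a *: g a = 0 -> forall a, a \in S -> c a = 0.
Proof.
move=> c_comb0 a aS.
have coef_free : row_free coef_mx.
  rewrite -row_leq_rank; apply: leq_trans S_card _.
  by rewrite col_leq_rank coef_mx_full.
have : \row_r c (enum_val r) *m coef_mx = 0.
  by rewrite coef_mx_comb c_comb0; apply/rowP => t; rewrite !mxE mcoeff0.
move/eqP; rewrite mulmx_free_eq0 // => /eqP/rowP/(_ (enum_rank_in aS a)).
by rewrite !mxE enum_rankK_in.
Qed.

End Independence.

Definition mindex_tail n k (a : mindex n k) : 'X_{1..n} :=
  [multinom (a (lift ord0 j) : nat) | j < n].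

Lemma mdeg_mindex_tail n k (a : mindex n k) :
  a \in latt n k -> (mdeg (mindex_tail a) < k.+1)%N.
Proof.
rewrite in_latt big_ord_recl mdegE ltnS => /eqP a_sum.
under eq_bigr do rewrite mnmE.
by apply: leq_trans (leq_addl (a ord0) _) _; rewrite a_sum.
Qed.

Lemma mindex_tail_inj n k : {in latt n k &, injective (@mindex_tail n k)}.
Proof.
move=> a b; rewrite !in_latt !big_ord_recl => a_sum b_sum /mnmP ab.
have ab_lift j : (a (lift ord0 j) : nat) = b (lift ord0 j).
  by have := ab j; rewrite !mnmE.
have ab_tail : (\sum_(j < n) (a (lift ord0 j) : nat) = \sum_(j < n) b (lift ord0 j))%N.
  exact: eq_bigr.
apply/ffunP => i; apply: val_inj; case: (unliftP ord0 i) => [j ->|->] //=.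
rewrite ab_tail in a_sum; exact: addIn (etrans (eqP a_sum) (esym (eqP b_sum))).
Qed.

Lemma card_latt n k : (#|latt n k| <= #|{: 'X_{1..n < k.+1}}|)%N.
Proof.
apply: (@leq_card_in _ _ (fun a => insubd bm0 (mindex_tail a))) => a b aL bL.
move/(congr1 val); rewrite !insubdK ?unfold_in ?mdeg_mindex_tail //.
exact: mindex_tail_inj.
Qed.

Lemma lampow_free (R : fieldType) n k (v : 'I_n.+1 -> 'I_n -> R)
    (lam : 'I_n.+1 -> {mpoly R[n]}) (c : mindex n k -> R) :
  (forall i, msize (lam i) <= 2)%N -> (forall i j, (lam i).@[v j] = (i == j)%:R) ->
  \sum_(a in latt n k) c a *: lampow lam a = 0 -> forall a, a \in latt n k -> c a = 0.
Proof.
move=> lam_affine lam_vert.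
apply: span_free _ (card_latt n k) c => p.
exact: (msize_inPk_lattP lam_affine lam_vert k p).1.
Qed.

Section BigPartition.
Variables (T I : finType) (P : pred I) (D : {set T}) (B : I -> {set T}).
Hypothesis D_B_disjoint : forall i, P i -> D :&: B i = set0.
Hypothesis B_disjoint : forall i j, P i -> P j -> i != j -> B i :&: B j = set0.

Lemma big_partition (V : nmodType) (G : T -> V) :
  \sum_(x in D :|: \bigcup_(i | P i) B i) G x
  = \sum_(x in D) G x + \sum_(i | P i) \sum_(x in B i) G x.
Proof.
rewrite (eq_bigl [predU D & \bigcup_(i | P i) B i]) => [|x]; last by rewrite !inE.
rewrite bigU; last first.
  rewrite -setI_eq0 big_distrr /=; apply/eqP/big1 => i Pi.
  exact: D_B_disjoint.
congr (_ + _); rewrite [\bigcup_(i | _) _]big_mkcond partition_disjoint_bigcup /=.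
  by rewrite [RHS]big_mkcond; apply: eq_bigr => i _; case: ifP; rewrite ?big_set0.
move=> i j ij; rewrite -setI_eq0; case: ifP => Pi; last by rewrite set0I.
by case: ifP => Pj; [rewrite B_disjoint | rewrite setI0].
Qed.

End BigPartition.

Section PkPartition.
Variables (R : comRingType) (n k : nat) (lam : 'I_n.+1 -> {mpoly R[n]}).
Variables (I : finType) (P : pred I) (D : {set mindex n k}) (B : I -> {set mindex n k}).
Hypothesis D_B_disjoint : forall i, P i -> D :&: B i = set0.
Hypothesis B_disjoint : forall i j, P i -> P j -> i != j -> B i :&: B j = set0.

Lemma inPk_partitionP p :
  inPk lam (D :|: \bigcup_(i | P i) B i) p <->
  exists q0 (q : I -> {mpoly R[n]}),
    [/\ inPk lam D q0, forall i, P i -> inPk lam (B i) (q i)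
      & p = q0 + \sum_(i | P i) q i].
Proof.
split=> [[c ->]|[q0 [q [D_q0 B_q ->]]]].
  rewrite big_partition //.
  exists (\sum_(a in D) c a *: lampow lam a), (fun i => \sum_(a in B i) c a *: lampow lam a).
  by split=> //; exists c.
apply: inPkD; first by apply: inPk_subset D_q0; apply: subsetUl.
apply: inPk_sum => i Pi; apply: inPk_subset (B_q i Pi).
by apply/subsetP => a aB; rewrite in_setU; apply/orP; right; apply/bigcupP; exists i.
Qed.

Lemma inPk_partition_eq0 q0 (q : I -> {mpoly R[n]}) :
  (forall c, \sum_(a in D :|: \bigcup_(i | P i) B i) c a *: lampow lam a = 0 ->
     forall a, a \in D :|: \bigcup_(i | P i) B i -> c a = 0) ->
  inPk lam D q0 -> (forall i, P i -> inPk lam (B i) (q i)) ->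
  q0 + \sum_(i | P i) q i = 0 -> q0 = 0 /\ forall i, P i -> q i = 0.
Proof.
move=> S_free [c0 ->] B_q q_sum0.
have /fin_all_exists[cq q_E] :
    forall i, exists c, P i -> q i = \sum_(a in B i) c a *: lampow lam a.
  by move=> i; have [/B_q[c ->]|_] := boolP (P i); [exists c | exists (fun=> 0)].
pose block a := [pick i | P i & a \in B i].
have blockE i a : P i -> a \in B i -> block a = Some i.
  move=> Pi aB; rewrite /block; case: pickP => [j /andP[Pj aBj]|/(_ i)]; last by rewrite Pi aB.
  congr Some; apply/eqP; apply: contraT => ji.
  by have /setP/(_ a) := B_disjoint Pj Pi ji; rewrite in_setI aBj aB in_set0.
pose C a := if a \in D then c0 a else if block a is Some i then cq i a else 0.
have C_B i a : P i -> a \in B i -> C a = cq i a.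
  move=> Pi aB; have /setP/(_ a) := D_B_disjoint Pi.
  by rewrite /C in_setI aB in_set0 andbT => ->; rewrite (blockE i).
have C0 := S_free C; rewrite big_partition // in C0.
have {}C0 : forall a, a \in D :|: \bigcup_(i | P i) B i -> C a = 0.
  apply: C0; rewrite -[RHS]q_sum0; congr (_ + _).
    by apply: eq_bigr => a aD; rewrite /C aD.
  by apply: eq_bigr => i Pi; rewrite q_E //; apply: eq_bigr => a aB; rewrite (C_B i).
split=> [|i Pi].
  rewrite big1 // => a aD; have := C0 a; rewrite /C aD in_setU aD => ->//.
  exact: scale0r.
rewrite q_E // big1 // => a aB; rewrite -(C_B i) // C0 ?scale0r //.
by rewrite in_setU; apply/orP; right; apply/bigcupP; exists i.
Qed.

End PkPartition.

Theorem mainTheorem12 (R : realFieldType) (n m k : nat)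
  (v : 'I_n.+1 -> 'I_n -> R) (lam : 'I_n.+1 -> {mpoly R[n]}) :
  (2 * m + 1 <= k)%N ->
  (* lam are the barycentric coordinates of the simplex T with vertices v:
     affine functions with lam_i(v_j) = delta_ij *)
  (forall i, (msize (lam i) <= 2)%N) ->
  (forall i j, (lam i).@[v j] = (i == j)%:R) ->
  (* Part 1: pairwise disjointness and covering *)
  ((forall i j : 'I_n.+1, i != j ->
      Dset k [set i] m :&: Dset k [set j] m = set0)
   /\ (forall (i : 'I_n.+1) (f : {set 'I_n.+1}), (2 <= #|f|)%N ->
      Dset k [set i] m :&: (Tint k f :\: Dverts k f m) = set0)
   /\ (forall f g : {set 'I_n.+1}, (2 <= #|f|)%N -> (2 <= #|g|)%N -> f != g ->
      (Tint k f :\: Dverts k f m) :&: (Tint k g :\: Dverts k g m) = set0)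
   /\ latt n k = (\bigcup_(i : 'I_n.+1) Dset k [set i] m)
                 :|: \bigcup_(f : {set 'I_n.+1} | (2 <= #|f|)%N)
                        (Tint k f :\: Dverts k f m))
  /\
  (* Part 2: P_k(T) = P_k(D(Delta_0(T),m)) (+) (+)_{l>=1} (+)_{f in Delta_l(T)} ... *)
  ((forall p : {mpoly R[n]},
      (msize p <= k.+1)%N <->
      exists (q0 : {mpoly R[n]}) (q : {set 'I_n.+1} -> {mpoly R[n]}),
        [/\ inPk lam (Dverts k setT m) q0,
            (forall f : {set 'I_n.+1}, (2 <= #|f|)%N -> inPk lam (Tint k f :\: Dverts k f m) (q f)) &
            p = q0 + \sum_(f : {set 'I_n.+1} | (2 <= #|f|)%N) q f])
   /\ (forall (q0 : {mpoly R[n]}) (q : {set 'I_n.+1} -> {mpoly R[n]}),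
        inPk lam (Dverts k setT m) q0 ->
        (forall f : {set 'I_n.+1}, (2 <= #|f|)%N -> inPk lam (Tint k f :\: Dverts k f m) (q f)) ->
        q0 + \sum_(f : {set 'I_n.+1} | (2 <= #|f|)%N) q f = 0 ->
        q0 = 0 /\ forall f : {set 'I_n.+1}, (2 <= #|f|)%N -> q f = 0)).
Proof.
move=> k_gt2m lam_affine lam_vert.
have latt_E : latt n k = Dverts k setT m
                          :|: \bigcup_(f : {set 'I_n.+1} | (2 <= #|f|)%N) TintD m k f.
  by rewrite Dverts_setT; apply: latt_partition.
have D_B_disjoint (f : {set 'I_n.+1}) :
    (2 <= #|f|)%N -> Dverts k setT m :&: TintD m k f = set0.
  by move=> _; apply: Dverts_TintD_disjoint.
have B_disjoint (f g : {set 'I_n.+1}) : (2 <= #|f|)%N -> (2 <= #|g|)%N -> f != g ->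
    TintD m k f :&: TintD m k g = set0.
  by move=> _ _; apply: TintD_disjoint.
split.
  split; first exact: Dset1_disjoint.
  split; first by move=> i f _; apply: Dset1_TintD_disjoint.
  by split; [exact: B_disjoint | exact: latt_partition].
split=> [p|q0 q].
  rewrite (msize_inPk_lattP lam_affine lam_vert) latt_E.
  exact: (inPk_partitionP _ D_B_disjoint B_disjoint).
apply: (inPk_partition_eq0 D_B_disjoint B_disjoint) => c.
by rewrite -latt_E; apply: lampow_free lam_affine lam_vert.
Qed.
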